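(* Let $G$ be a large scale group of bounded geometry that is not locally bounded and is $\sigma$-bounded. If $G$ has exactly two ends, then $G$ contains an infinite cyclic subgroup of bounded index.
   Context: A large scale group is a group $G$ with a bornology $\mathcal B$ (a cover closed under subsets and finite unions) closed under inverses and products; uniformly bounded covers are those refining $\{gB\}_{g\in G}$ for some $B\in\mathcal B$; bounded sets are members of $\mathcal B$. $G$ has bounded geometry if it is coarsely equivalent to a large scale space $Y$ in which every uniformly bounded cover $\mathcal U$ has a bound $N(\mathcal U)$ on the cardinality of its elements (equivalently, there is a bounded $K\subseteq G$ such that every bounded set is covered by finitely many translates $gK$). $G$ is locally bounded if $\langle B\rangle$ is bounded for every bounded $B$. $G$ is $\sigma$-bounded if it is the union of countably many bounded subsets. A subgroup $H$ has bounded index if $B\cdot H=G$ for some bounded $B$. For $A\subseteq G$ and a cover $\mathcal U$, $st(A,\mathcal U)$ is the union of members of $\mathcal U$ meeting $A$; $A$ is coarsely clopen if $st(A,\mathcal U)\cap st(G\setminus A,\mathcal U)$ is bounded for each uniformly bounded $\mathcal U$. An end is a family of unbounded coarsely clopen sets maximal with respect to all finite intersections being unbounded. *)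

From Stdlib Require Import List.

Record Group := {
  carrier :> Type;
  gmul : carrier -> carrier -> carrier;
  ginv : carrier -> carrier;
  gone : carrier;
  gmulA : forall x y z, gmul x (gmul y z) = gmul (gmul x y) z;
  gmul1l : forall x, gmul gone x = x;
  gmul1r : forall x, gmul x gone = x;
  gmulVl : forall x, gmul (ginv x) x = gone;
  gmulVr : forall x, gmul x (ginv x) = gone
}.

Arguments gmul {_}. Arguments ginv {_}. Arguments gone {_}.

Section LS.
Variable G : Group.
Variable bdd : (G -> Prop) -> Prop.

Definition is_large_scale_group : Prop :=
  (forall x : G, exists A, bdd A /\ A x) /\
  (forall A A' : G -> Prop, bdd A -> (forall x, A' x -> A x) -> bdd A') /\
  (forall A A' : G -> Prop, bdd A -> bdd A' -> bdd (fun x => A x \/ A' x)) /\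
  (forall A : G -> Prop, bdd A -> bdd (fun x => A (ginv x))) /\
  (forall A A' : G -> Prop, bdd A -> bdd A' ->
     bdd (fun x => exists a b, A a /\ A' b /\ x = gmul a b)).

Definition ltrans (g : G) (B : G -> Prop) : G -> Prop :=
  fun x => exists b, B b /\ x = gmul g b.

Definition unif_bdd_cover (U : (G -> Prop) -> Prop) : Prop :=
  (forall x : G, exists V, U V /\ V x) /\
  exists B, bdd B /\
    forall V, U V -> exists g, forall x, V x -> ltrans g B x.

Definition star (A : G -> Prop) (U : (G -> Prop) -> Prop) : G -> Prop :=
  fun x => exists V, U V /\ (exists a, V a /\ A a) /\ V x.

Definition coarsely_clopen (A : G -> Prop) : Prop :=
  forall U, unif_bdd_cover U ->
    bdd (fun x => star A U x /\ star (fun y => ~ A y) U x).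

Definition bigI (l : list (G -> Prop)) : G -> Prop :=
  fun x => Forall (fun A => A x) l.

Definition pre_end (E : (G -> Prop) -> Prop) : Prop :=
  (forall A, E A -> ~ bdd A /\ coarsely_clopen A) /\
  (forall l, l <> nil -> Forall E l -> ~ bdd (bigI l)).

Definition is_end (E : (G -> Prop) -> Prop) : Prop :=
  pre_end E /\
  forall E', pre_end E' -> (forall A, E A -> E' A) -> forall A, E' A -> E A.

Definition same_family (E E' : (G -> Prop) -> Prop) : Prop :=
  forall A, E A <-> E' A.

Definition has_exactly_two_ends : Prop :=
  exists E1 E2, is_end E1 /\ is_end E2 /\ ~ same_family E1 E2 /\
    forall E, is_end E -> same_family E E1 \/ same_family E E2.

Definition subgroup (H : G -> Prop) : Prop :=
  H gone /\ (forall x y, H x -> H y -> H (gmul x y)) /\ (forall x, H x -> H (ginv x)).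

Definition gen (B : G -> Prop) : G -> Prop :=
  fun x => forall H, subgroup H -> (forall b, B b -> H b) -> H x.

Definition locally_bounded : Prop :=
  forall B, bdd B -> bdd (gen B).

Definition sigma_bounded : Prop :=
  exists Bn : nat -> G -> Prop, (forall n, bdd (Bn n)) /\ forall x, exists n, Bn n x.

(* bounded geometry, in the equivalent form given in the paper's context *)
Definition bounded_geometry : Prop :=
  exists K, bdd K /\ forall B, bdd B ->
    exists l : list G, forall x, B x -> exists g, In g l /\ ltrans g K x.

Definition bounded_index (H : G -> Prop) : Prop :=
  exists B, bdd B /\ forall x : G, exists b h, B b /\ H h /\ x = gmul b h.

Fixpoint gpow (a : G) (n : nat) : G :=
  match n with O => gone | S m => gmul a (gpow a m) end.

Definition infinite_cyclic (H : G -> Prop) : Prop :=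
  exists a : G, (forall n, n <> O -> gpow a n <> gone) /\
    forall x, H x <-> exists n, x = gpow a n \/ x = ginv (gpow a n).

End LS.

(* The proof has three steps.
   1. Two distinct ends give a coarsely clopen set A such that A and its
      complement are unbounded.  As there is no third end, every translate
      gA is almost equal (up to a bounded set) to A or to its complement:
      g stabilises or flips A.  Such an A is called a splitting set.
   2. Since G is not locally bounded, a bounded symmetric set D generates an
      unbounded subgroup L.  The coarse boundary of A meets finitely many
      cosets of L, and a coset missing it would lie inside A or inside its
      complement, contradicting step 1; so L has finite index, and a bounded
      symmetric set Sg generates G: G is the union of the balls Sg^n.
   3. The Sg-boundary of A lies in a ball Sg^r.  A point far inside A yields
      an element t stabilising A which moves Sg^r deep into A.  Then tA is
      contained in A, the bounded set A \ tA is a fundamental domain for <t>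
      (a pigeonhole argument using bounded geometry shows that every orbit
      of <t> enters and leaves A), and <t> is infinite cyclic of bounded index. *)

From Stdlib Require Import List Classical Arith Lia IndefiniteDescription.
From mathcomp Require classical_sets.
Import ListNotations.

Section TwoEndedGroups.
Variable G : Group.
Variable bdd : (G -> Prop) -> Prop.
Hypothesis HLS : is_large_scale_group G bdd.

Local Infix "·" := gmul (at level 40, left associativity).
Local Notation compl X := (fun x => ~ X x).

Lemma mulgA (x y z : G) : x · (y · z) = x · y · z. Proof. apply gmulA. Qed.
Lemma mul1g (x : G) : gone · x = x. Proof. apply gmul1l. Qed.
Lemma mulg1 (x : G) : x · gone = x. Proof. apply gmul1r. Qed.

Lemma mulKg (x y : G) : ginv x · (x · y) = y.
Proof. now rewrite mulgA, gmulVl, mul1g. Qed.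
Lemma mulKVg (x y : G) : x · (ginv x · y) = y.
Proof. now rewrite mulgA, gmulVr, mul1g. Qed.
Lemma mulgK (x y : G) : x · y · ginv y = x.
Proof. now rewrite <- mulgA, gmulVr, mulg1. Qed.
Lemma mulgKV (x y : G) : x · ginv y · y = x.
Proof. now rewrite <- mulgA, gmulVl, mulg1. Qed.

Lemma invg_uniq (x y : G) : x · y = gone -> y = ginv x.
Proof. intro Hxy. now rewrite <- (mulKg x y), Hxy, mulg1. Qed.
Lemma invgK (x : G) : ginv (ginv x) = x.
Proof. symmetry. apply invg_uniq, gmulVl. Qed.
Lemma invMg (x y : G) : ginv (x · y) = ginv y · ginv x.
Proof.
  symmetry. apply invg_uniq.
  now rewrite <- mulgA, (mulgA y), gmulVr, mul1g, gmulVr.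
Qed.
Lemma invg1 : ginv (gone : G) = gone.
Proof. symmetry. apply invg_uniq, mul1g. Qed.

Lemma bdd_sub (A B : G -> Prop) : bdd A -> (forall x, B x -> A x) -> bdd B.
Proof. intros; eapply (proj1 (proj2 HLS)); eauto. Qed.
Lemma bdd_union (A B : G -> Prop) : bdd A -> bdd B -> bdd (fun x => A x \/ B x).
Proof. apply HLS. Qed.
Lemma bdd_inv (A : G -> Prop) : bdd A -> bdd (fun x => A (ginv x)).
Proof. apply HLS. Qed.
Lemma bdd_prod (A B : G -> Prop) : bdd A -> bdd B ->
  bdd (fun x => exists a b, A a /\ B b /\ x = a · b).
Proof. apply HLS. Qed.

Lemma bdd_cover2 (A B C : G -> Prop) :
  bdd A -> bdd B -> (forall x, C x -> A x \/ B x) -> bdd C.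
Proof. intros HA HB HC. eapply bdd_sub; [apply (bdd_union A B HA HB)|exact HC]. Qed.

Lemma bdd_single (g : G) : bdd (fun x => x = g).
Proof.
  destruct (proj1 HLS g) as [A [HA Ag]].
  apply (bdd_sub A); [exact HA|now intros x ->].
Qed.

Lemma bdd_empty : bdd (fun _ : G => False).
Proof. apply (bdd_sub _ _ (bdd_single gone)). tauto. Qed.

Lemma bdd_list_union (l : list G) (F : G -> G -> Prop) :
  (forall g, In g l -> bdd (F g)) -> bdd (fun x => exists g, In g l /\ F g x).
Proof.
  induction l as [|a l IH]; intros HF.
  - apply (bdd_sub _ _ bdd_empty). now intros x [g [[] _]].
  - apply (bdd_cover2 (F a) (fun x => exists g, In g l /\ F g x)).
    + apply HF. now left.
    + apply IH. intros g Hg. apply HF. now right.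
    + intros x [g [[<-|Hg] Hx]]; [left|right; exists g]; auto.
Qed.

Lemma bdd_list (l : list G) : bdd (fun x => In x l).
Proof.
  apply (bdd_sub _ _ (bdd_list_union l (fun g x => x = g) (fun g _ => bdd_single g))).
  intros x Hx. now exists x.
Qed.

Definition tr (g : G) (P : G -> Prop) : G -> Prop := fun x => P (ginv g · x).

Lemma tr_mul (a b : G) (P : G -> Prop) x : tr (a · b) P x <-> tr a (tr b P) x.
Proof. unfold tr. now rewrite invMg, mulgA. Qed.

Lemma bdd_tr (g : G) (P : G -> Prop) : bdd P -> bdd (tr g P).
Proof.
  intro HP.
  apply (bdd_sub _ _ (bdd_prod _ _ (bdd_single g) HP)).
  intros x Hx. exists g, (ginv g · x). now rewrite mulKVg.
Qed.

Lemma bdd_tr_inv (g : G) (P : G -> Prop) : bdd (tr g P) -> bdd P.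
Proof.
  intro HP. apply (bdd_sub _ _ (bdd_tr (ginv g) _ HP)).
  intros x Hx. unfold tr. now rewrite invgK, mulKg.
Qed.

(** Word balls: [Ball D n] is the set D^n of products of n elements of D;
    when D is symmetric and contains 1 this is the n-ball of the word metric. *)

Fixpoint Ball (D : G -> Prop) (n : nat) : G -> Prop :=
  match n with
  | O => fun x => x = gone
  | S n => fun x => exists a d, Ball D n a /\ D d /\ x = a · d
  end.

Lemma Ball_S (D : G -> Prop) n x : D gone -> Ball D n x -> Ball D (S n) x.
Proof. intros D1 Hx. exists x, gone. now rewrite mulg1. Qed.

Lemma Ball_le (D : G -> Prop) n m x : D gone -> n <= m -> Ball D n x -> Ball D m x.
Proof. intros D1 Hle. induction Hle; auto using Ball_S. Qed.

Lemma Ball_mul (D : G -> Prop) m n a b :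
  Ball D m a -> Ball D n b -> Ball D (m + n) (a · b).
Proof.
  revert b. induction n as [|n IH]; intros b Ha Hb; simpl in Hb.
  - subst. now rewrite mulg1, Nat.add_0_r.
  - destruct Hb as [b' [d [Hb' [Dd ->]]]]. rewrite Nat.add_succ_r.
    exists (a · b'), d. rewrite mulgA. auto.
Qed.

Lemma Ball_one (D : G -> Prop) d : D d -> Ball D 1 d.
Proof. intro Dd. exists gone, d. now rewrite mul1g. Qed.

Lemma Ball_inv (D : G -> Prop) n w :
  (forall d, D d -> D (ginv d)) -> Ball D n w -> Ball D n (ginv w).
Proof.
  intro Dsym. revert w. induction n as [|n IH]; intros w Hw; simpl in Hw.
  - subst. apply invg1.
  - destruct Hw as [a [d [Ha [Dd ->]]]]. rewrite invMg.
    apply (Ball_mul D 1 n); auto using Ball_one.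
Qed.

Lemma Ball_sub (D D' : G -> Prop) n x :
  (forall y, D y -> D' y) -> Ball D n x -> Ball D' n x.
Proof.
  intro HD. revert x. induction n as [|n IH]; intros x Hx; simpl in *; auto.
  destruct Hx as [a [d [Ha [Dd ->]]]]. exists a, d. auto.
Qed.

Lemma Ball_bdd (D : G -> Prop) n : bdd D -> bdd (Ball D n).
Proof.
  intro HD. induction n as [|n IH]; [apply bdd_single|].
  exact (bdd_prod _ _ IH HD).
Qed.

Definition Lset (D : G -> Prop) : G -> Prop := fun x => exists n, Ball D n x.

Lemma Lset_subgroup (D : G -> Prop) :
  (forall d, D d -> D (ginv d)) -> subgroup G (Lset D).
Proof.
  intro D_sym. split; [|split].
  - now exists 0.
  - intros a b [m Ha] [n Hb]. exists (m + n). now apply Ball_mul.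
  - intros a [m Ha]. exists m. now apply Ball_inv.
Qed.

Lemma Lset_gen (D : G -> Prop) d : D d -> Lset D d.
Proof. intro Dd. exists 1. now apply Ball_one. Qed.


Definition boundary (D P : G -> Prop) : G -> Prop :=
  fun x => exists d, D d /\ ~ (P x <-> P (x · d)).

Definition translates (D : G -> Prop) : (G -> Prop) -> Prop :=
  fun V => exists g, V = ltrans G g D.

Lemma translates_unif_bdd (D : G -> Prop) :
  bdd D -> D gone -> unif_bdd_cover G bdd (translates D).
Proof.
  intros HD D1. split.
  - intro x. exists (ltrans G x D). split; [now exists x|].
    exists gone. now rewrite mulg1.
  - exists D. split; [exact HD|]. intros V [g ->]. now exists g.
Qed.

(* The D-boundary of a coarsely clopen set is bounded: it lies in the
   intersection of the stars of A and of its complement w.r.t. the cover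
   by translates of D. *)
Lemma ccl_boundary_bdd (A D : G -> Prop) :
  coarsely_clopen G bdd A -> bdd D -> D gone -> bdd (boundary D A).
Proof.
  intros HA HD D1. apply (bdd_sub _ _ (HA _ (translates_unif_bdd D HD D1))).
  intros x [d [Dd Hd]].
  assert (Tx : translates D (ltrans G x D)) by now exists x.
  assert (Hx : ltrans G x D x) by (exists gone; now rewrite mulg1).
  assert (Hxd : ltrans G x D (x · d)) by now exists d.
  destruct (classic (A x)) as [Ax|nAx]; split; exists (ltrans G x D);
    repeat split; auto.
  - now exists x.
  - exists (x · d). split; [exact Hxd|tauto].
  - exists (x · d). split; [exact Hxd|]. apply NNPP. tauto.
  - now exists x.
Qed.

Lemma star_mono (A A' : G -> Prop) U x :
  (forall y, A y -> A' y) -> star G A U x -> star G A' U x.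
Proof. intros H [V [HV [[a [Va Aa]] Vx]]]. exists V. eauto 6. Qed.

Lemma ccl_compl (A : G -> Prop) :
  coarsely_clopen G bdd A -> coarsely_clopen G bdd (compl A).
Proof.
  intros HA U HU. apply (bdd_sub _ _ (HA U HU)). intros x [H1 H2]. split; [|exact H1].
  eapply star_mono; [|exact H2]. intros y Hy. now apply NNPP.
Qed.

Lemma ccl_inter (A B : G -> Prop) : coarsely_clopen G bdd A -> coarsely_clopen G bdd B ->
  coarsely_clopen G bdd (fun x => A x /\ B x).
Proof.
  intros HA HB U HU. apply (bdd_cover2 _ _ _ (HA U HU) (HB U HU)).
  intros x [H1 [V [HV [[a [Va Na]] Vx]]]].
  assert (HAB : star G A U x /\ star G B U x).
  { split; eapply star_mono; try exact H1; now intros y [? ?]. }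
  destruct (classic (A a)) as [Aa|nAa]; [right|left]; split; try apply HAB;
    exists V; repeat split; auto; exists a; split; auto.
Qed.

Lemma ccl_tr (A : G -> Prop) g :
  coarsely_clopen G bdd A -> coarsely_clopen G bdd (tr g A).
Proof.
  intros HA U HU.
  (* the cover U translated by g^-1 *)
  set (U' := fun V' => exists V, U V /\ V' = (fun y => V (g · y))).
  assert (HU' : unif_bdd_cover G bdd U').
  { destruct HU as [Hc [B [HB Hr]]]. split.
    - intro x. destruct (Hc (g · x)) as [V [HV Vx]].
      exists (fun y => V (g · y)). split; [now exists V|exact Vx].
    - exists B. split; [exact HB|]. intros V' [V [HV ->]].
      destruct (Hr V HV) as [h Hh]. exists (ginv g · h).
      intros y Vy. destruct (Hh _ Vy) as [b [Bb Eb]].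
      exists b. split; [exact Bb|]. now rewrite <- mulgA, <- Eb, mulKg. }
  apply (bdd_sub _ _ (bdd_tr g _ (HA U' HU'))).
  intros x [[V [HV [[a [Va Aa]] Vx]]] [V2 [HV2 [[a2 [Va2 Aa2]] Vx2]]]].
  unfold tr. split.
  - exists (fun y => V (g · y)). split; [now exists V|].
    split; [exists (ginv g · a)|]; now rewrite mulKVg.
  - exists (fun y => V2 (g · y)). split; [now exists V2|].
    split; [exists (ginv g · a2)|]; now rewrite mulKVg.
Qed.

Lemma notnot_iff (P : Prop) : ~ ~ P <-> P.
Proof. split; [apply NNPP|tauto]. Qed.

Definition almost_eq (P Q : G -> Prop) : Prop := bdd (fun x => ~ (P x <-> Q x)).

Lemma almost_eq_ext (P Q P' Q' : G -> Prop) :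
  (forall x, P x <-> P' x) -> (forall x, Q x <-> Q' x) ->
  almost_eq P Q -> almost_eq P' Q'.
Proof.
  intros HP HQ H. apply (bdd_sub _ _ H). intro x.
  specialize (HP x). specialize (HQ x). tauto.
Qed.

Lemma almost_eq_trans (P Q R : G -> Prop) :
  almost_eq P Q -> almost_eq Q R -> almost_eq P R.
Proof.
  intros H1 H2. apply (bdd_cover2 _ _ _ H1 H2). intros x Hx.
  destruct (classic (P x <-> Q x)); [right|left]; tauto.
Qed.

Lemma almost_eq_compl (P Q : G -> Prop) :
  almost_eq P Q -> almost_eq (compl P) (compl Q).
Proof.
  intro H. apply (bdd_sub _ _ H). intros x Hx HPQ. apply Hx. tauto.
Qed.

Lemma almost_eq_disjoint (P Q X : G -> Prop) :
  almost_eq P X -> almost_eq Q (compl X) -> bdd (fun x => P x /\ Q x).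
Proof.
  intros HP HQ. apply (bdd_cover2 _ _ _ HP HQ). intros x [Px Qx].
  destruct (classic (X x)); [right|left]; tauto.
Qed.

Definition stabilises (X : G -> Prop) (g : G) : Prop := almost_eq (tr g X) X.
Definition flips (X : G -> Prop) (g : G) : Prop := almost_eq (tr g X) (compl X).

Lemma flips_stab (X : G -> Prop) a b :
  flips X a -> stabilises X b -> flips X (a · b).
Proof.
  intros Ha Hb. apply (almost_eq_trans _ (tr a X)); [|exact Ha].
  apply (almost_eq_ext (tr a (tr b X)) (tr a X)); [|easy|exact (bdd_tr a _ Hb)].
  intro x. now rewrite tr_mul.
Qed.

Lemma flips_flips (X : G -> Prop) a b :
  flips X a -> flips X b -> stabilises X (a · b).
Proof.
  intros Ha Hb. apply (almost_eq_trans _ (tr a (compl X))).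
  - apply (almost_eq_ext (tr a (tr b X)) (tr a (compl X)));
      [|easy|exact (bdd_tr a _ Hb)].
    intro x. now rewrite tr_mul.
  - apply (almost_eq_ext _ _ _ _ (fun x => iff_refl _) (fun x => notnot_iff _)).
    exact (almost_eq_compl _ _ Ha).
Qed.

Lemma stab_flip_excl (X : G -> Prop) g :
  ~ bdd X -> stabilises X g -> flips X g -> False.
Proof.
  intros HX Hs Hf. apply HX. apply (bdd_cover2 _ _ _ Hs Hf).
  intros x _. destruct (classic (tr g X x)), (classic (X x)); tauto.
Qed.

Lemma stab_compl (X : G -> Prop) g : stabilises X g -> stabilises (compl X) g.
Proof. exact (almost_eq_compl _ _). Qed.

Lemma flips_compl (X : G -> Prop) g : flips X g -> flips (compl X) g.
Proof. exact (almost_eq_compl _ _). Qed.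

Definition splitting (X : G -> Prop) : Prop :=
  coarsely_clopen G bdd X /\ ~ bdd X /\ ~ bdd (compl X) /\
  forall g, stabilises X g \/ flips X g.

Lemma splitting_compl (X : G -> Prop) : splitting X -> splitting (compl X).
Proof.
  intros [cX [uX [uX' HX]]]. split; [now apply ccl_compl|]. split; [exact uX'|].
  split.
  - intro Hb. apply uX. apply (bdd_sub _ _ Hb). auto.
  - intro g. destruct (HX g); [left; now apply stab_compl|right; now apply flips_compl].
Qed.


Lemma bigI_cons (A : G -> Prop) l x : bigI G (A :: l) x <-> A x /\ bigI G l x.
Proof.
  unfold bigI. split; [intro H; now inversion H|intros [? ?]; now constructor].
Qed.

Lemma chain_list (F : ((G -> Prop) -> Prop) -> Prop) :
  (forall E1 E2, F E1 -> F E2 ->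
     (forall X, E1 X -> E2 X) \/ (forall X, E2 X -> E1 X)) ->
  forall l, l <> nil -> Forall (fun X => exists E, F E /\ E X) l ->
  exists E, F E /\ Forall E l.
Proof.
  intros Htot l. induction l as [|a l IH]; intros Hnil Hl; [congruence|].
  inversion Hl as [|? ? [Ea [FEa Eaa]] Hl']; subst.
  destruct l as [|b l]; [exists Ea; auto|].
  destruct (IH ltac:(discriminate) Hl') as [E [FE HE]].
  destruct (Htot Ea E FEa FE) as [H|H].
  - exists E. auto.
  - exists Ea. split; [exact FEa|]. constructor; [exact Eaa|].
    eapply Forall_impl; [|exact HE]. exact H.
Qed.

(* By Zorn's lemma, every unbounded coarsely clopen set belongs to an end. *)
Lemma end_through (P0 : G -> Prop) :
  coarsely_clopen G bdd P0 -> ~ bdd P0 -> exists E, is_end G bdd E /\ E P0.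
Proof.
  intros Hc Hu.
  set (Pf := fun E : (G -> Prop) -> Prop =>
    pre_end G bdd E /\ (E P0 \/ forall X, ~ E X)).
  assert (Hsing : pre_end G bdd (fun X => X = P0)).
  { split; [now intros A ->|]. intros l Hl Hf Hb. apply Hu.
    apply (bdd_sub _ _ Hb). intros x Px. eapply Forall_impl; [|exact Hf].
    now intros a ->. }
  destruct (@classical_sets.Zorn_bigcup (G -> Prop) Pf) as [E [PE Emax]].
  - intros F HF Htot. unfold classical_sets.bigcup. simpl. split; [split|].
    + intros A [E FE EA]. exact (proj1 (proj1 (HF E FE)) A EA).
    + intros l Hl Hf.
      assert (Ht : forall E1 E2, F E1 -> F E2 ->
                (forall X, E1 X -> E2 X) \/ (forall X, E2 X -> E1 X)).
      { intros E1 E2 H1 H2.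
        destruct (Htot E1 E2 H1 H2) as [H|H]; [left|right]; intros X HX; now apply H. }
      assert (Hf' : Forall (fun X => exists E, F E /\ E X) l).
      { eapply Forall_impl; [|exact Hf]. intros a [E FE Ea]. eauto. }
      destruct (chain_list F Ht l Hl Hf') as [E [FE HE]].
      now apply (proj2 (proj1 (HF E FE))).
    + destruct (classic (exists E, F E /\ E P0)) as [[E [FE EP]]|Hn].
      * left. now exists E.
      * right. intros X [E FE EX].
        destruct (proj2 (HF E FE)) as [H|H]; [apply Hn; eauto|eapply H; eauto].
  - assert (EP : E P0).
    { destruct (proj2 PE) as [H|H]; [exact H|]. exfalso.
      apply (Emax (fun X => X = P0)); [|split; auto]. split.
      + intros X EX. exfalso. eapply H; eauto.
      + intro Hs. apply (H P0). now apply Hs. }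
    exists E. split; [|exact EP]. split; [apply PE|].
    intros E' HE' Hsub A E'A. apply NNPP. intro nEA.
    apply (Emax E'); [|split; auto].
    split; [exact Hsub|]. intro Hs. apply nEA. now apply Hs.
Qed.

Lemma ends_distinct E1 E2 (X Y : G -> Prop) :
  is_end G bdd E1 -> is_end G bdd E2 -> E1 X -> E2 Y ->
  bdd (fun x => X x /\ Y x) -> ~ same_family G E1 E2.
Proof.
  intros H1 H2 HX HY Hb Hs. apply (proj2 (proj1 H1) [X; Y]); [discriminate| |].
  - repeat constructor; auto. now apply Hs.
  - apply (bdd_sub _ _ Hb). intros x Hx.
    apply bigI_cons in Hx as [? Hx]. apply bigI_cons in Hx as [? _]. auto.
Qed.

Lemma bigI_split E (X : G -> Prop) l :
  Forall (fun A => E A \/ A = X) l ->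
  exists l', Forall E l' /\ forall x, X x -> bigI G l' x -> bigI G l x.
Proof.
  induction l as [|a l IH]; intros Hf.
  - exists nil. split; [constructor|]. intros x _ _. apply Forall_nil.
  - inversion Hf as [|? ? Ha Hl]; subst. destruct (IH Hl) as [l' [H1 H2]].
    destruct Ha as [Ha| ->].
    + exists (a :: l'). split; [now constructor|].
      intros x Xx Hx. apply bigI_cons in Hx as [? ?]. apply bigI_cons. auto.
    + exists l'. split; [exact H1|]. intros x Xx Hx. apply bigI_cons. auto.
Qed.

(* A member of an end E outside another end E' has unbounded complement:
   otherwise it could be adjoined to E'. *)
Lemma end_member_cobounded E E' (X : G -> Prop) :
  is_end G bdd E -> is_end G bdd E' -> E X -> ~ E' X -> ~ bdd (compl X).
Proof.
  intros eE eE' EX nE'X Hb. apply nE'X.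
  destruct (proj1 (proj1 eE) X EX) as [uX cX].
  apply (proj2 eE' (fun A => E' A \/ A = X)); auto. split.
  - intros A [HA| ->]; [now apply (proj1 (proj1 eE'))|auto].
  - intros l Hl Hf Hbl. destruct (bigI_split E' X l Hf) as [l' [Hl' Himp]].
    destruct l' as [|a l''].
    + apply uX. apply (bdd_sub _ _ Hbl). intros x Xx. apply Himp; [exact Xx|constructor].
    + apply (proj2 (proj1 eE') (a :: l'')); [discriminate|exact Hl'|].
      apply (bdd_cover2 _ _ _ Hbl Hb). intros x Hx.
      destruct (classic (X x)); [left; now apply Himp|right; auto].
Qed.

Lemma bdd_disjoint (X Y : G -> Prop) :
  (forall x, X x -> Y x -> False) -> bdd (fun x => X x /\ Y x).
Proof. intro H. apply (bdd_sub _ _ bdd_empty). intros x [? ?]. eauto. Qed.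

(* The propositional core of the next lemma: if no three of four sets are
   unbounded but each of four given pairs contains an unbounded one, then
   exactly a complementary pair is bounded. *)
Lemma two_of_four (b1 b2 b3 b4 : Prop) :
  ~ (~ b1 /\ ~ b2 /\ ~ b3) -> ~ (~ b1 /\ ~ b2 /\ ~ b4) ->
  ~ (~ b1 /\ ~ b3 /\ ~ b4) -> ~ (~ b2 /\ ~ b3 /\ ~ b4) ->
  ~ (b1 /\ b3) -> ~ (b2 /\ b4) -> ~ (b1 /\ b2) -> ~ (b3 /\ b4) ->
  (b2 /\ b3) \/ (b1 /\ b4).
Proof. destruct (classic b1), (classic b2), (classic b3), (classic b4); tauto. Qed.

Section ExactlyTwoEnds.
Hypothesis H2E : has_exactly_two_ends G bdd.

(* There are no three unbounded coarsely clopen sets which are pairwise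
   almost disjoint: they would lie in three distinct ends. *)
Lemma no_three_ends (X Y Z : G -> Prop) :
  coarsely_clopen G bdd X -> coarsely_clopen G bdd Y -> coarsely_clopen G bdd Z ->
  ~ bdd X -> ~ bdd Y -> ~ bdd Z ->
  bdd (fun x => X x /\ Y x) -> bdd (fun x => X x /\ Z x) ->
  bdd (fun x => Y x /\ Z x) -> False.
Proof.
  intros cX cY cZ uX uY uZ XY XZ YZ.
  destruct (end_through X cX uX) as [EX [eX EXX]].
  destruct (end_through Y cY uY) as [EY [eY EYY]].
  destruct (end_through Z cZ uZ) as [EZ [eZ EZZ]].
  pose proof (ends_distinct _ _ _ _ eX eY EXX EYY XY) as dXY.
  pose proof (ends_distinct _ _ _ _ eX eZ EXX EZZ XZ) as dXZ.
  pose proof (ends_distinct _ _ _ _ eY eZ EYY EZZ YZ) as dYZ.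
  destruct H2E as [E1 [E2 [_ [_ [_ Hall]]]]].
  assert (same_trans : forall E E' E'', same_family G E E'' ->
            same_family G E' E'' -> same_family G E E').
  { intros E E' E'' a b A. rewrite (a A), (b A). tauto. }
  destruct (Hall EX eX), (Hall EY eY), (Hall EZ eZ); eauto.
Qed.

(* A coarsely clopen S splitting G into two unbounded parts is almost equal
   to A or to its complement: of the four pieces cut out by S and A, at most
   two are unbounded. *)
Lemma almost_eq_or_compl (A S : G -> Prop) :
  coarsely_clopen G bdd A -> ~ bdd A -> ~ bdd (compl A) ->
  coarsely_clopen G bdd S -> ~ bdd S -> ~ bdd (compl S) ->
  almost_eq S A \/ almost_eq S (compl A).
Proof.
  intros cA uA uA' cS uS uS'.
  set (p1 := fun x => S x /\ A x). set (p2 := fun x => S x /\ ~ A x).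
  set (p3 := fun x => ~ S x /\ A x). set (p4 := fun x => ~ S x /\ ~ A x).
  assert (c1 : coarsely_clopen G bdd p1) by now apply ccl_inter.
  assert (c2 : coarsely_clopen G bdd p2) by (apply ccl_inter; auto using ccl_compl).
  assert (c3 : coarsely_clopen G bdd p3) by (apply ccl_inter; auto using ccl_compl).
  assert (c4 : coarsely_clopen G bdd p4) by (apply ccl_inter; auto using ccl_compl).
  assert (n123 : ~ (~ bdd p1 /\ ~ bdd p2 /\ ~ bdd p3)).
  { intros [? [? ?]]. apply (no_three_ends p1 p2 p3); auto;
      apply bdd_disjoint; intros x [? ?] [? ?]; contradiction. }
  assert (n124 : ~ (~ bdd p1 /\ ~ bdd p2 /\ ~ bdd p4)).
  { intros [? [? ?]]. apply (no_three_ends p1 p2 p4); auto;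
      apply bdd_disjoint; intros x [? ?] [? ?]; contradiction. }
  assert (n134 : ~ (~ bdd p1 /\ ~ bdd p3 /\ ~ bdd p4)).
  { intros [? [? ?]]. apply (no_three_ends p1 p3 p4); auto;
      apply bdd_disjoint; intros x [? ?] [? ?]; contradiction. }
  assert (n234 : ~ (~ bdd p2 /\ ~ bdd p3 /\ ~ bdd p4)).
  { intros [? [? ?]]. apply (no_three_ends p2 p3 p4); auto;
      apply bdd_disjoint; intros x [? ?] [? ?]; contradiction. }
  (* each of A, compl A, S, compl S is the union of two pieces *)
  assert (split_by : forall (P Q R : G -> Prop), ~ bdd R ->
            (forall x, R x -> P x \/ Q x) -> ~ (bdd P /\ bdd Q)).
  { intros P Q R uR HR [bP bQ]. exact (uR (bdd_cover2 _ _ _ bP bQ HR)). }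
  assert (n13 : ~ (bdd p1 /\ bdd p3)).
  { apply (split_by _ _ A uA). intros x Ax.
    destruct (classic (S x)); [left|right]; now split. }
  assert (n24 : ~ (bdd p2 /\ bdd p4)).
  { apply (split_by _ _ (compl A) uA'). intros x Ax.
    destruct (classic (S x)); [left|right]; now split. }
  assert (n12 : ~ (bdd p1 /\ bdd p2)).
  { apply (split_by _ _ S uS). intros x Sx.
    destruct (classic (A x)); [left|right]; now split. }
  assert (n34 : ~ (bdd p3 /\ bdd p4)).
  { apply (split_by _ _ (compl S) uS'). intros x Sx.
    destruct (classic (A x)); [left|right]; now split. }
  destruct (two_of_four _ _ _ _ n123 n124 n134 n234 n13 n24 n12 n34) as [[? ?]|[? ?]].
  - left. apply (bdd_cover2 p2 p3); auto. intros x Hx. unfold p2, p3. clear - Hx.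
    destruct (classic (S x)); [left|right]; split; tauto.
  - right. apply (bdd_cover2 p1 p4); auto. intros x Hx. unfold p1, p4. clear - Hx.
    destruct (classic (S x)); [left|right]; split; tauto.
Qed.

Lemma splitting_set_exists : exists A, splitting A.
Proof.
  assert (Hsplit : forall A, coarsely_clopen G bdd A -> ~ bdd A ->
            ~ bdd (compl A) -> splitting A).
  { intros A cA uA uA'. do 3 (split; auto). intro g.
    apply (almost_eq_or_compl A (tr g A)); auto using ccl_tr.
    - intro H. exact (uA (bdd_tr_inv g _ H)).
    - intro H. exact (uA' (bdd_tr_inv g _ H)). }
  destruct H2E as [E1 [E2 [e1 [e2 [Hd _]]]]].
  assert (Hend : forall E E' X, is_end G bdd E -> is_end G bdd E' ->
            E X -> ~ E' X -> exists A, splitting A).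
  { intros E E' X eE eE' EX nE'X. exists X.
    destruct (proj1 (proj1 eE) X EX) as [uX cX].
    exact (Hsplit X cX uX (end_member_cobounded E E' X eE eE' EX nE'X)). }
  destruct (classic (exists X, E1 X /\ ~ E2 X)) as [[X [H1 H2]]|Hn1];
    [eauto|].
  destruct (classic (exists X, E2 X /\ ~ E1 X)) as [[X [H1 H2]]|Hn2];
    [eauto|].
  exfalso. apply Hd. intro A. split; intro H; apply NNPP; intro; eauto.
Qed.
End ExactlyTwoEnds.

(** The coarse boundary of a
    splitting set A meets only finitely many cosets of L; any other coset
    lies inside A or inside its complement, which is impossible. *)

Definition geometry_gauge (K : G -> Prop) : Prop :=
  forall B, bdd B -> exists l : list G, forall x, B x -> exists g, In g l /\ ltrans G g K x.

Section FiniteIndex.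
Variables A D K : G -> Prop.
Hypothesis A_split : splitting A.
Hypothesis D_bdd : bdd D.
Hypothesis D_one : D gone.
Hypothesis D_sym : forall d, D d -> D (ginv d).
Hypothesis K_gauge : geometry_gauge K.
Hypothesis K_D : forall k, K k -> D k.
Hypothesis L_unbdd : ~ bdd (Lset D).
Hypothesis A_stab_or_flip :
  (forall g, stabilises A g) \/ (exists u, flips A u /\ Lset D u).

Let L_one : Lset D gone := proj1 (Lset_subgroup D D_sym).
Let L_mul : forall a b, Lset D a -> Lset D b -> Lset D (a · b) :=
  proj1 (proj2 (Lset_subgroup D D_sym)).
Let L_inv : forall a, Lset D a -> Lset D (ginv a) :=
  proj2 (proj2 (Lset_subgroup D D_sym)).

Definition covered (l : list G) (x : G) : Prop :=
  exists g m, In g l /\ Lset D m /\ x = g · m.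

Definition coset_in (z : G) (P : G -> Prop) : Prop :=
  forall m, Lset D m -> P (z · m).

Lemma coset_constant (P : G -> Prop) z :
  (forall m, Lset D m -> ~ boundary D P (z · m)) ->
  forall m, Lset D m -> (P (z · m) <-> P z).
Proof.
  intros Hz m [n Hm]. revert m Hm. induction n as [|n IH]; intros m Hm; simpl in Hm.
  - subst. now rewrite mulg1.
  - destruct Hm as [m' [d [Hm' [Dd ->]]]]. rewrite <- (IH m' Hm'), mulgA.
    destruct (classic (P (z · m') <-> P (z · m' · d))) as [H|H]; [tauto|].
    exfalso. apply (Hz m'); [now exists n|]. now exists d.
Qed.

Lemma coset_trichotomy :
  exists l, forall x, covered l x \/ coset_in x A \/ coset_in x (compl A).
Proof.
  destruct A_split as [cA _].
  destruct (K_gauge _ (ccl_boundary_bdd A D cA D_bdd D_one)) as [l Hl].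
  exists l. intro x. destruct (classic (covered l x)) as [Hc|Hc]; [now left|right].
  assert (Havoid : forall m, Lset D m -> ~ boundary D A (x · m)).
  { intros m Lm Hb. apply Hc. destruct (Hl _ Hb) as [g [Hg [k [Kk Ek]]]].
    exists g, (k · ginv m). repeat split; auto using Lset_gen.
    now rewrite mulgA, <- Ek, mulgK. }
  destruct (classic (A x)) as [Ax|nAx]; [left|right]; intros m Lm;
    rewrite (coset_constant A x Havoid m Lm); exact Ax || exact nAx.
Qed.

Lemma coset_shift (a b c : G) : ginv (a · ginv b) · (a · c) = b · c.
Proof. now rewrite invMg, invgK, <- mulgA, mulKg. Qed.

(* If every element
   stabilises X, a coset inside X and a coset inside its complement would make
   L bounded, so the complement of X would lie in the finitely many exceptional
   cosets; if some u in L flips X, the coset yL = yuL lies in both y^-1X and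
   (uy^-1)^-1X, which are almost complementary. *)
Lemma no_coset_inside (X : G -> Prop) (l : list G) :
  splitting X -> ((forall g, stabilises X g) \/ (exists u, flips X u /\ Lset D u)) ->
  (forall x, covered l x \/ coset_in x X \/ coset_in x (compl X)) ->
  forall y, ~ coset_in y X.
Proof.
  intros [_ [_ [uX' HX]]] [Hall|[u [Fu Lu]]] Htri y Hy.
  - assert (no_out : forall x, ~ coset_in x (compl X)).
    { intros x Hx. apply L_unbdd.
      apply (bdd_sub _ _ (almost_eq_disjoint _ _ _ (Hall (ginv y))
                            (stab_compl _ _ (Hall (ginv x))))).
      intros m Lm. unfold tr. rewrite !invgK. auto. }
    apply uX'.
    apply (bdd_sub _ _ (bdd_list_union l (fun g x => ~ (tr (g · ginv y) X x <-> X x))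
                          (fun g _ => Hall _))).
    intros x nXx. destruct (Htri x) as [[g [m [Hg [Lm ->]]]]|[Hin|Hout]].
    + exists g. split; [exact Hg|]. intro H. apply nXx, H.
      unfold tr. rewrite coset_shift. auto.
    + exfalso. apply nXx. rewrite <- (mulg1 x). auto.
    + exfalso. exact (no_out x Hout).
  - apply L_unbdd.
    assert (Hyu : forall m, Lset D m -> tr (u · ginv y) X m).
    { intros m Lm. unfold tr. rewrite invMg, invgK, <- mulgA. auto. }
    assert (Hy' : forall m, Lset D m -> tr (ginv y) X m).
    { intros m Lm. unfold tr. rewrite invgK. auto. }
    destruct (HX (ginv y)) as [S1|F1].
    + apply (bdd_sub _ _ (almost_eq_disjoint _ _ _ S1 (flips_stab X u _ Fu S1))). auto.
    + apply (bdd_sub _ _ (almost_eq_disjoint _ _ _ (flips_flips X u _ Fu F1) F1)). auto.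
Qed.

Theorem finite_index : exists l, forall x, covered l x.
Proof.
  destruct coset_trichotomy as [l Hl]. exists l. intro x.
  destruct (Hl x) as [H|[H|H]]; [exact H|exfalso..].
  - exact (no_coset_inside A l A_split A_stab_or_flip Hl x H).
  - apply (no_coset_inside (compl A) l (splitting_compl A A_split)) with (y := x);
      [|intro z; destruct (Hl z) as [?|[H'|?]]; auto|exact H].
    + destruct A_stab_or_flip as [Hs|[u [Fu Lu]]]; [left|right].
      * intro g. now apply stab_compl.
      * exists u. split; [now apply flips_compl|exact Lu].
    + right. right. intros m Lm Hn. exact (Hn (H' m Lm)).
Qed.
End FiniteIndex.

Lemma gpow_add (a : G) m n : gpow G a (m + n) = gpow G a m · gpow G a n.
Proof.
  induction m as [|m IH]; simpl; [now rewrite mul1g|now rewrite IH, mulgA].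
Qed.

Lemma gpow_S_r (a : G) n : gpow G a (S n) = gpow G a n · a.
Proof.
  replace (S n) with (n + 1) by lia. rewrite gpow_add. simpl. now rewrite mulg1.
Qed.

Lemma gpow_inv (a : G) n : ginv (gpow G a n) = gpow G (ginv a) n.
Proof.
  induction n as [|n IH]; [apply invg1|].
  simpl gpow at 1. now rewrite invMg, IH, gpow_S_r.
Qed.

Definition cyclic_set (a : G) : G -> Prop :=
  fun x => exists n, x = gpow G a n \/ x = ginv (gpow G a n).

Lemma cyclic_set_powV (a : G) m n : cyclic_set a (ginv (gpow G a m) · gpow G a n).
Proof.
  destruct (le_lt_dec m n) as [H|H].
  - exists (n - m). left. replace n with (m + (n - m)) at 1 by lia.
    now rewrite gpow_add, mulKg.
  - exists (m - n). right. replace m with (n + (m - n)) at 1 by lia.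
    now rewrite gpow_add, invMg, mulgKV.
Qed.

Lemma cyclic_set_powVr (a : G) m n : cyclic_set a (gpow G a m · ginv (gpow G a n)).
Proof.
  destruct (le_lt_dec n m) as [H|H].
  - exists (m - n). left. replace m with ((m - n) + n) at 1 by lia.
    now rewrite gpow_add, mulgK.
  - exists (n - m). right. replace n with ((n - m) + m) at 1 by lia.
    now rewrite gpow_add, invMg, mulKVg.
Qed.

Lemma cyclic_subgroup (a : G) : subgroup G (cyclic_set a).
Proof.
  split; [|split].
  - exists 0. now left.
  - intros x y [m [->| ->]] [n [->| ->]].
    + exists (m + n). left. now rewrite gpow_add.
    + apply cyclic_set_powVr.
    + apply cyclic_set_powV.
    + exists (n + m). right. now rewrite gpow_add, invMg.
  - intros x [n [->| ->]]; exists n; [right|left]; auto. apply invgK.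
Qed.

Section WordMetric.
Variables Sg K : G -> Prop.
Hypothesis Sg_bdd : bdd Sg.
Hypothesis Sg_one : Sg gone.
Hypothesis Sg_sym : forall s, Sg s -> Sg (ginv s).
Hypothesis K_gauge : geometry_gauge K.
Hypothesis K_Sg : forall k, K k -> Sg k.
Hypothesis Sg_gen : forall x, exists n, Ball Sg n x.

Lemma bdd_in_ball (Y : G -> Prop) : bdd Y -> exists r, forall y, Y y -> Ball Sg r y.
Proof.
  intro HY.
  assert (Hlist : forall l, exists r, forall g, In g l -> Ball Sg r g).
  { induction l as [|a l [r IH]]; [exists 0; intros g []|].
    destruct (Sg_gen a) as [n Hn]. exists (Nat.max n r). intros g [<-|Hg].
    - apply (Ball_le Sg n); auto. lia.
    - apply (Ball_le Sg r); auto. lia. }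
  destruct (K_gauge Y HY) as [l Hl]. destruct (Hlist l) as [r Hr].
  exists (r + 1). intros y Yy.
  destruct (Hl y Yy) as [g [Hg [k [Kk ->]]]].
  apply Ball_mul; auto using Ball_one.
Qed.

Lemma path_crosses_boundary (P : G -> Prop) n w y :
  Ball Sg n w -> ~ (P y <-> P (y · w)) ->
  exists v, Ball Sg n v /\ boundary Sg P (y · v).
Proof.
  revert w. induction n as [|n IH]; intros w Hw HP; simpl in Hw.
  - subst. rewrite mulg1 in HP. tauto.
  - destruct Hw as [w' [s [Hw' [Ss ->]]]].
    destruct (classic (P y <-> P (y · w'))) as [H|H].
    + exists w'. split; [now apply Ball_S|]. exists s. split; [exact Ss|].
      rewrite <- mulgA. tauto.
    + destruct (IH w' Hw' H) as [v [Hv1 Hv2]]. exists v. split; auto using Ball_S.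
Qed.

Lemma crossing (P : G -> Prop) r n w y :
  (forall z, boundary Sg P z -> Ball Sg r z) ->
  Ball Sg n w -> ~ (P y <-> P (y · w)) -> Ball Sg (r + n) y.
Proof.
  intros HP Hw Hy. destruct (path_crosses_boundary P n w y Hw Hy) as [v [Hv Hyv]].
  rewrite <- (mulgK y v). apply Ball_mul; auto using Ball_inv.
Qed.

(* Pigeonhole: if no positive power of a lies in the r-ball (r >= 2), the
   positive powers of a do not all lie in one ball, since by bounded geometry
   two of them would lie in a common translate of K. *)
Lemma powers_escape (a : G) r M :
  2 <= r -> (forall k, 1 <= k -> ~ Ball Sg r (gpow G a k)) ->
  ~ (forall m, Ball Sg M (gpow G a (S m))).
Proof.
  intros r2 Hsep HM.
  destruct (K_gauge (Ball Sg M) (Ball_bdd Sg M Sg_bdd)) as [l Hl].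
  set (f := fun m => proj1_sig (constructive_indefinite_description _ (Hl _ (HM m)))).
  assert (Hf : forall m, In (f m) l /\ ltrans G (f m) K (gpow G a (S m))).
  { intro m. unfold f. now destruct (constructive_indefinite_description _ _). }
  assert (Hcol : exists i j, i < j /\ f i = f j).
  { apply NNPP. intro Hn.
    assert (Hnd : NoDup (map f (seq 0 (S (length l))))).
    { apply NoDup_map_NoDup_ForallPairs; [|apply seq_NoDup].
      intros i j _ _ Hij. destruct (Nat.lt_total i j) as [H|[H|H]]; auto;
        exfalso; apply Hn; eauto. }
    apply NoDup_incl_length with (l' := l) in Hnd.
    - rewrite length_map, length_seq in Hnd. lia.
    - intros g Hg. apply in_map_iff in Hg as [m [<- _]]. apply Hf. }
  destruct Hcol as [i [j [Hij Efij]]].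
  destruct (Hf i) as [_ [k1 [Kk1 E1]]]. destruct (Hf j) as [_ [k2 [Kk2 E2]]].
  apply (Hsep (j - i)); [lia|].
  assert (Ej : gpow G a (S j) = gpow G a (S i) · gpow G a (j - i)).
  { rewrite <- gpow_add. f_equal. lia. }
  assert (Ek : gpow G a (j - i) = ginv k1 · k2).
  { rewrite <- (mulKg (gpow G a (S i)) (gpow G a (j - i))), <- Ej, E1, E2, Efij,
      invMg, <- mulgA, mulKg.
    reflexivity. }
  rewrite Ek. apply (Ball_le Sg 2); auto.
  apply (Ball_mul Sg 1 1); apply Ball_one; auto.
Qed.

Section DeepStabiliser.
Variable A : G -> Prop.
Hypothesis A_cobdd : ~ bdd (compl A).
Variable r : nat.
Hypothesis r_ge2 : 2 <= r.
Hypothesis A_boundary : forall z, boundary Sg A z -> Ball Sg r z.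
Variable t : G.
Hypothesis t_stab : stabilises A t.
Hypothesis t_deep : forall w, Ball Sg r w -> A (t · w) /\ ~ Ball Sg r (t · w).

(* A (s · x) says that x lies in tA. *)
Let s := ginv t.

Lemma Ball_r_one : Ball Sg r gone.
Proof. apply (Ball_le Sg 0); [exact Sg_one|lia|reflexivity]. Qed.

(* The boundary of tA is t times that of A, which misses the r-ball, so
   membership in tA (that is, A (s · w)) is constant on the r-ball ... *)
Lemma tA_on_ball w : Ball Sg r w -> (A (s · w) <-> A s).
Proof.
  intro Hw. apply NNPP. intro Hn.
  destruct (path_crosses_boundary A r w s Hw) as [v [Hv Hsv]]; [tauto|].
  apply (proj2 (t_deep _ (A_boundary _ Hsv))). unfold s. now rewrite mulKVg.
Qed.

(* ... and on the complement of A, which is joined to the r-ball by paths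
   avoiding the boundary of tA. *)
Lemma tA_off_A n c : Ball Sg n c -> ~ A c -> (A (s · c) <-> A s).
Proof.
  revert c. induction n as [|n IH]; intros c Hc nAc; simpl in Hc.
  - subst. now rewrite mulg1.
  - destruct (classic (Ball Sg r c)) as [Hr|Hr]; [now apply tA_on_ball|].
    destruct Hc as [c' [x [Hc' [Sx ->]]]].
    assert (nAc' : ~ A c').
    { intro Ac'. apply Hr, A_boundary. exists (ginv x). split; [auto|].
      rewrite mulgK. tauto. }
    rewrite <- (IH c' Hc' nAc'), mulgA.
    apply NNPP. intro Hn. apply nAc'.
    replace c' with (t · (s · c')) by (unfold s; apply mulKVg).
    apply t_deep, A_boundary. exists x. split; [exact Sx|tauto].
Qed.

(* 1 is not in tA: otherwise the complement of A would lie in the bounded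
   set tA \ A. *)
Lemma one_notin_tA : ~ A s.
Proof.
  intro As. apply A_cobdd. apply (bdd_sub _ _ t_stab). intros c nAc.
  destruct (Sg_gen c) as [n Hn].
  assert (tr t A c) by (apply (tA_off_A n c Hn nAc); exact As). tauto.
Qed.

Lemma tA_sub_A c : A (s · c) -> A c.
Proof.
  intro H. apply NNPP. intro nAc. destruct (Sg_gen c) as [n Hn].
  apply one_notin_tA. now apply (tA_off_A n c Hn nAc).
Qed.

Lemma tA_misses_ball w : Ball Sg r w -> ~ A (s · w).
Proof. intros Hw H. apply one_notin_tA. now apply (tA_on_ball w Hw). Qed.

Lemma t_pow_in_A m : A (gpow G t (S m)).
Proof.
  induction m as [|m IH].
  - simpl. rewrite mulg1, <- (mulg1 t). apply t_deep, Ball_r_one.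
  - apply tA_sub_A. change (A (s · (t · gpow G t (S m)))). unfold s. now rewrite mulKg.
Qed.

Lemma s_pow_notin_A m : ~ A (gpow G s (S m)).
Proof.
  induction m as [|m IH].
  - simpl. rewrite mulg1, <- (mulg1 s). apply tA_misses_ball, Ball_r_one.
  - intro H. apply IH, tA_sub_A, H.
Qed.

Lemma t_pow_far k : 1 <= k -> ~ Ball Sg r (gpow G t k).
Proof.
  intros Hk Hb. destruct k as [|[|k]]; [lia| |].
  - simpl in Hb. rewrite mulg1 in Hb. apply (proj2 (t_deep gone Ball_r_one)).
    now rewrite mulg1.
  - apply (tA_misses_ball _ Hb). change (A (s · (t · gpow G t (S k)))).
    unfold s. rewrite mulKg. apply t_pow_in_A.
Qed.

Lemma s_pow_far k : 1 <= k -> ~ Ball Sg r (gpow G s k).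
Proof.
  intros Hk Hb. apply (t_pow_far k Hk). apply Ball_inv in Hb; [|exact Sg_sym].
  unfold s in Hb. now rewrite gpow_inv, invgK in Hb.
Qed.

Lemma enters_A x : exists m, A (gpow G t m · x).
Proof.
  apply NNPP. intro Hn. destruct (Sg_gen x) as [n Hn'].
  apply (powers_escape t r (r + n) r_ge2 t_pow_far). intro m.
  apply (crossing A r n x _ A_boundary Hn').
  pose proof (t_pow_in_A m) as Hm. intro Hiff. apply Hn. exists (S m). tauto.
Qed.

Lemma leaves_A x : exists n, ~ A (gpow G s n · x).
Proof.
  apply NNPP. intro Hn. destruct (Sg_gen x) as [n Hn'].
  apply (powers_escape s r (r + n) r_ge2 s_pow_far). intro m.
  apply (crossing A r n x _ A_boundary Hn').
  pose proof (s_pow_notin_A m) as Hm. intro Hiff. apply Hn. exists (S m). tauto.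
Qed.

Lemma last_in_A n x :
  A x -> ~ A (gpow G s n · x) ->
  exists j, A (gpow G s j · x) /\ ~ A (gpow G s (S j) · x).
Proof.
  revert x. induction n as [|n IH]; intros x Ax nA.
  - simpl in nA. now rewrite mul1g in nA.
  - destruct (classic (A (gpow G s n · x))) as [H|H]; [now exists n|auto].
Qed.

Theorem deep_stabiliser_cyclic :
  subgroup G (cyclic_set t) /\ infinite_cyclic G (cyclic_set t) /\
  bounded_index G bdd (cyclic_set t).
Proof.
  split; [apply cyclic_subgroup|split].
  - exists t. split; [|easy]. intros n Hn E. apply (t_pow_far n); [lia|].
    rewrite E. apply Ball_r_one.
  - (* the inverse of the fundamental domain A \ tA *)
    exists (fun b => A (ginv b) /\ ~ A (s · ginv b)). split.
    { apply (bdd_inv (fun x => A x /\ ~ A (s · x))).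
      apply (bdd_sub _ _ t_stab). intros x [Ax nA]. tauto. }
    intro x. destruct (enters_A (ginv x)) as [m Hm].
    destruct (leaves_A (gpow G t m · ginv x)) as [n Hn].
    destruct (last_in_A n _ Hm Hn) as [j [Hj1 Hj2]].
    exists (ginv (gpow G s j · (gpow G t m · ginv x))), (ginv (gpow G t j) · gpow G t m).
    split; [|split; [apply cyclic_set_powV|]].
    + rewrite invgK. split; [exact Hj1|]. rewrite mulgA. exact Hj2.
    + unfold s. rewrite <- gpow_inv, !invMg, !invgK.
      now rewrite <- (mulgA (x · ginv (gpow G t m))), mulKVg, mulgKV.
Qed.
End DeepStabiliser.

(* A splitting set A whose boundary lies in the r-ball has a deep
   stabiliser: a point x of A far from 1 pushes a larger ball into A away
   from the r-ball; if x flips A then so does some u in Sg, and x·u is a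
   stabiliser with the same property. *)
Lemma deep_stabiliser_exists (A : G -> Prop) r :
  splitting A -> (forall z, boundary Sg A z -> Ball Sg r z) ->
  (forall g, stabilises A g) \/ (exists u, flips A u /\ Sg u) ->
  exists t, stabilises A t /\
    forall w, Ball Sg r w -> A (t · w) /\ ~ Ball Sg r (t · w).
Proof.
  intros [_ [uA [_ HA]]] Hbnd Hw.
  assert (Hx : exists x, A x /\ ~ Ball Sg (r + S r) x).
  { apply NNPP. intro Hn. apply uA.
    apply (bdd_sub _ _ (Ball_bdd Sg (r + S r) Sg_bdd)).
    intros x Ax. apply NNPP. intro H. apply Hn. eauto. }
  destruct Hx as [x [Ax nBx]].
  assert (deep : forall w, Ball Sg (S r) w -> A (x · w) /\ ~ Ball Sg r (x · w)).
  { intros w Hw'. split.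
    - apply NNPP. intro H. apply nBx. apply (crossing A r (S r) w x Hbnd Hw'). tauto.
    - intro H. apply nBx. rewrite <- (mulgK x w). apply Ball_mul; auto using Ball_inv. }
  destruct (HA x) as [Sx|Fx].
  - exists x. split; [exact Sx|]. intros w Hw'. apply deep, (Ball_le Sg r); auto.
  - destruct Hw as [Hall|[u [Fu Su]]].
    + exfalso. exact (stab_flip_excl A x uA (Hall x) Fx).
    + exists (x · u). split; [now apply flips_flips|]. intros w Hw'.
      rewrite <- mulgA. apply deep, (Ball_mul Sg 1 r); auto using Ball_one.
Qed.

End WordMetric.

(** As G is not locally bounded, a bounded set
    B0 generates an unbounded subgroup; adjoining K, a possible flip u and the
    finitely many coset representatives from [finite_index] yields a bounded
    symmetric set whose balls exhaust G. *)

Definition symmetrise (P : G -> Prop) : G -> Prop := fun x => P x \/ P (ginv x).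

Lemma symmetrise_bdd (P : G -> Prop) : bdd P -> bdd (symmetrise P).
Proof. intro HP. apply bdd_union; auto using bdd_inv. Qed.

Lemma symmetrise_sym (P : G -> Prop) x : symmetrise P x -> symmetrise P (ginv x).
Proof. unfold symmetrise. rewrite invgK. tauto. Qed.

Lemma generating_set (A K : G -> Prop) :
  splitting A -> bdd K -> geometry_gauge K -> ~ locally_bounded G bdd ->
  exists Sg, bdd Sg /\ Sg gone /\ (forall s, Sg s -> Sg (ginv s)) /\
    (forall k, K k -> Sg k) /\ (forall x, exists n, Ball Sg n x) /\
    ((forall g, stabilises A g) \/ (exists u, flips A u /\ Sg u)).
Proof.
  intros A_split K_bdd K_gauge nLB.
  destruct (not_all_ex_not _ _ nLB) as [B0 HB0].
  apply imply_to_and in HB0 as [B0_bdd B0_gen].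
  assert (Hu : exists u, (forall g, stabilises A g) \/ flips A u).
  { destruct (classic (forall g, stabilises A g)) as [H|H]; [exists gone; now left|].
    destruct (not_all_ex_not _ _ H) as [u Hu]. exists u. right.
    destruct (proj2 (proj2 (proj2 A_split)) u); tauto. }
  destruct Hu as [u Hu].
  set (D0 := fun x => x = gone \/ B0 x \/ K x \/ x = u).
  set (D := symmetrise D0).
  assert (D_bdd : bdd D).
  { apply symmetrise_bdd. repeat apply bdd_union; auto using bdd_single. }
  assert (D_one : D gone) by (left; now left).
  assert (L_unbdd : ~ bdd (Lset D)).
  { intro H. apply B0_gen. apply (bdd_sub _ _ H). intros x Hx.
    apply Hx; [now apply Lset_subgroup, symmetrise_sym|].
    intros b Hb. apply Lset_gen. left. unfold D0. tauto. }
  assert (D_u : D u) by (left; unfold D0; tauto).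
  destruct (finite_index A D K A_split D_bdd D_one (symmetrise_sym D0) K_gauge
              (fun k Kk => or_introl (or_intror (or_intror (or_introl Kk)))) L_unbdd)
    as [l Hl].
  { destruct Hu as [Hs|Fu]; [now left|right]. exists u. auto using Lset_gen. }
  set (Sg := symmetrise (fun x => D0 x \/ In x l)).
  assert (D_Sg : forall x, D x -> Sg x) by (unfold Sg, D, symmetrise; tauto).
  exists Sg. repeat split.
  - apply symmetrise_bdd, bdd_union; [repeat apply bdd_union; auto using bdd_single|].
    apply bdd_list.
  - now apply D_Sg.
  - apply symmetrise_sym.
  - intros k Kk. apply D_Sg. left. unfold D0. tauto.
  - intro x. destruct (Hl x) as [g [m [Hg [[n Hm] ->]]]]. exists (1 + n).
    apply Ball_mul; [apply Ball_one; left; now right|exact (Ball_sub D Sg n m D_Sg Hm)].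
  - destruct Hu as [Hs|Fu]; [now left|right]. exists u. auto.
Qed.

End TwoEndedGroups.

Theorem theorem9p13 (G : Group) (bdd : (G -> Prop) -> Prop) :
  is_large_scale_group G bdd ->
  bounded_geometry G bdd ->
  ~ locally_bounded G bdd ->
  sigma_bounded G bdd ->
  has_exactly_two_ends G bdd ->
  exists H : G -> Prop, subgroup G H /\ infinite_cyclic G H /\ bounded_index G bdd H.
Proof.
  intros HLS [K [K_bdd K_gauge]] nLB _ H2E.
  destruct (splitting_set_exists G bdd HLS H2E) as [A A_split].
  destruct (generating_set G bdd HLS A K A_split K_bdd K_gauge nLB)
    as [Sg [Sg_bdd [Sg_one [Sg_sym [K_Sg [Sg_gen Hflip]]]]]].
  (* the boundary of A lies in some ball of radius at least 2 *)
  destruct (bdd_in_ball G bdd Sg K Sg_one K_gauge K_Sg Sg_gen (boundary G Sg A)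
              (ccl_boundary_bdd G bdd HLS A Sg (proj1 A_split) Sg_bdd Sg_one)) as [r0 Hr0].
  assert (A_bnd : forall z, boundary G Sg A z -> Ball G Sg (r0 + 2) z).
  { intros z Hz. apply (Ball_le G Sg r0); auto. lia. }
  destruct (deep_stabiliser_exists G bdd HLS Sg Sg_bdd Sg_one Sg_sym A (r0 + 2)
              A_split A_bnd Hflip) as [t [t_stab t_deep]].
  exists (cyclic_set G t).
  apply (deep_stabiliser_cyclic G bdd HLS Sg K Sg_bdd Sg_one Sg_sym K_gauge K_Sg Sg_gen
           A (proj1 (proj2 (proj2 A_split))) (r0 + 2) ltac:(lia) A_bnd t t_stab t_deep).
Qed.
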